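(* Let $G$ be a cop-win graph on $n\geq 7$ vertices and let $m\geq 1$. Then $\mathrm{capt}(G,m)\leq (m-1)\,\mathrm{diam}(G)+m(n-4)$.
   Context: All graphs are finite, simple, connected and reflexive (every vertex is considered adjacent to itself, so a player may stay in place). The game of $k$ cops and $m$ robbers on $G$: in round 0 the cops first choose starting vertices, then the robbers choose theirs. In each round $i\geq 1$, all $k$ cops move (each to an adjacent vertex or staying), then all $m$ robbers move likewise. Several players may occupy the same vertex. Whenever a cop and some robbers occupy the same vertex, those robbers are captured and take no further part in the game. Both sides have full information. The cops win if all robbers are captured after finitely many rounds. $G$ is $k$-cop-win if $k$ cops can always win against one robber (cop-win means $1$-cop-win). For a $k$-cop-win graph $G$ and $\ell\geq k$, $\mathrm{capt}_\ell(G,m)$ is the index of the round in which the last robber is captured when $\ell$ cops play to minimize this index and $m$ robbers play to maximize it; $\mathrm{capt}(G,m)=\mathrm{capt}_1(G,m)$. $\mathrm{diam}(G)$ is the diameter of $G$. *)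

From mathcomp Require Import all_boot.
Set Implicit Arguments. Unset Strict Implicit. Unset Printing Implicit Defensive.

Section CopsRobbers.
Variables (T : finType) (e : rel T).

Definition adj (x y : T) : bool := (x == y) || e x y.

(* Walk of exactly k steps in the reflexive graph, i.e. distance <= k. *)
Definition within (k : nat) (x y : T) : bool :=
  [exists p : k.-tuple T, path adj x p && (last x p == y)].

(* Graph distance: least k with y within k steps of x
   (for connected graphs it is < #|T|). *)
Definition dist (x y : T) : nat := find (fun k => within k x y) (iota 0 #|T|).

Definition diam : nat := \max_(x : T) \max_(y : T) dist x y.

(* Positions of the m robbers; None = already captured. *)
Definition capture (m : nat) (c : T) (R : 'I_m -> option T) : 'I_m -> option T :=
  fun i => if R i == Some c then None else R i.

Definition robber_move (m : nat) (R R2 : 'I_m -> option T) : Prop :=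
  forall i, match R i with
            | None => R2 i = None
            | Some v => exists2 w, R2 i = Some w & adj v w
            end.

(* cop_wins_within k c R : it is the cop's turn, cop at c, robbers at R
   (none on c); the cop can force capture of all robbers within k more rounds. *)
Inductive cop_wins_within (m : nat) : nat -> T -> ('I_m -> option T) -> Prop :=
| cww_done k c R : (forall i, R i = None) -> cop_wins_within k c R
| cww_step k c R c' : adj c c' ->
    (forall R2, robber_move (capture c' R) R2 ->
       cop_wins_within k c' (capture c' R2)) ->
    cop_wins_within k.+1 c R.

(* Round 0: cop places,
   then robbers place (robbers placed on the cop are captured in round 0). *)
Definition capt_le (m N : nat) : Prop :=
  exists c0 : T, forall R0 : 'I_m -> T,
    cop_wins_within N c0 (capture c0 (fun i => Some (R0 i))).

Definition copwin : Prop := exists N, capt_le 1 N.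

End CopsRobbers.

From mathcomp Require Import all_boot zify.
Set Implicit Arguments. Unset Strict Implicit. Unset Printing Implicit Defensive.

(* A cop-win graph G has a corner: a vertex v whose closed neighbourhood lies
   in that of another vertex u.  The retraction G -> G - v sending v to u maps
   moves to moves, so G - v is cop-win, and a cop who plays the strategy of
   G - v against the image of the robber (its shadow) is adjacent to the robber
   once the shadow is caught: deleting a corner lowers the capture time by at
   most one.  Removing corners down to 7 vertices, where capture time 3 is
   checked exhaustively over the dismantling orders of all cop-win graphs,
   gives a vertex c0 from which one cop catches any single robber within
   n - 4 rounds.  Against m robbers the cop chases them one at a time from c0,
   walking back to c0 in at most diam(G) rounds between two chases. *)

Lemma eq_Some (T : eqType) (a b : T) : (Some a == Some b) = (a == b).
Proof. by []. Qed.

Section OneRobber.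
Variables (T : finType) (e : rel T).

Lemma adjxx x : adj e x x. Proof. by rewrite /adj eqxx. Qed.

(* The cop, at [c], is to move; the robber is at [r]. *)
Fixpoint catch_in (k : nat) (c r : T) : bool :=
  if k is k'.+1 then
    [exists c', adj e c c' &&
       ((c' == r) || [forall r', adj e r r' ==> (r' == c') || catch_in k' c' r'])]
  else false.

Lemma catch_inS k c r : catch_in k.+1 c r =
  [exists c', adj e c c' &&
     ((c' == r) || [forall r', adj e r r' ==> (r' == c') || catch_in k c' r'])].
Proof. by []. Qed.

Lemma catch_in_adj k c r : adj e c r -> catch_in k.+1 c r.
Proof. by move=> cr; apply/existsP; exists r; rewrite cr eqxx. Qed.

Definition capt1_le (k : nat) : Prop :=
  exists c0, forall r, r != c0 -> catch_in k c0 r.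

Lemma cop_wins_within1_catch_in k c (R : 'I_1 -> option T) :
  cop_wins_within e k c R -> forall r, (forall i, R i = Some r) -> catch_in k c r.
Proof.
elim=> {k c R} [k c R R0 r Rr | k c R c' cc' win IH r Rr].
  by have := R0 ord0; rewrite Rr.
rewrite catch_inS; apply/existsP; exists c'; rewrite cc' andTb.
have [-> //|c'r] := eqVneq c' r.
apply/orP; right; apply/forallP => r'; apply/implyP => rr'.
have [-> //|r'c'] := eqVneq r' c'.
rewrite (IH (fun _ => Some r')) ?orbT //.
  by move=> i; rewrite /capture Rr eq_Some eq_sym (negbTE c'r); exists r'.
by move=> i; rewrite /capture eq_Some (negbTE r'c').
Qed.

Lemma capt_le1_capt1_le N : capt_le e 1 N -> capt1_le N.
Proof.
case=> c0 win; exists c0 => r rc0.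
apply: (cop_wins_within1_catch_in (win (fun _ => r))) => i.
by rewrite /capture eq_Some (negbTE rc0).
Qed.

Definition corner (v u : T) : bool :=
  (v != u) && [forall w, adj e v w ==> adj e u w].

Lemma no_corner_escape :
  (forall v u, ~~ corner v u) -> forall k c r, ~~ adj e c r -> ~~ catch_in k c r.
Proof.
move=> nocorner; elim=> [//|k IH] c r cr; rewrite catch_inS.
apply/negP => /existsP[c' /andP[cc' win]].
have rc' : r != c' by apply: contra cr => /eqP ->.
case/orP: win => [/eqP c'r|/forallP win]; first by rewrite c'r eqxx in rc'.
have /existsP[w] : [exists w, adj e r w && ~~ adj e c' w].
  move: (nocorner r c'); rewrite /corner rc' negb_forall.
  by under eq_existsb do rewrite negb_imply.
case/andP=> rw c'w; case/orP: (implyP (win w) rw) => [/eqP wc'|].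
  by rewrite wc' adjxx in c'w.
by rewrite (negbTE (IH _ _ c'w)).
Qed.

Lemma capt1_le_corner K : capt1_le K -> 1 < #|T| -> exists v u, corner v u.
Proof.
case=> c0 win T_gt1.
have [/existsP[v /existsP[u vu]]|] := boolP [exists v, exists u, corner v u].
  by exists v, u.
rewrite negb_exists => /forallP nocorner.
have {}nocorner v u : ~~ corner v u.
  by move: (nocorner v); rewrite negb_exists => /forallP.
have c0_universal w : adj e c0 w.
  have [-> |wc0] := eqVneq w c0; first exact: adjxx.
  by apply: contraT => /(no_corner_escape nocorner K) /negP; case; apply: win.
have : 0 < #|predC1 c0| by rewrite cardC1; case: #|T| T_gt1.
case/card_gt0P => v; rewrite inE => vc0; exists v, c0.
by rewrite /corner vc0; apply/forallP => w; rewrite c0_universal implybT.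
Qed.

End OneRobber.

Section CornerRemoval.
Variables (T : finType) (e : rel T) (v u : T).
Hypotheses (e_sym : symmetric e) (vu_corner : corner e v u).

Local Notation Tv := {x : T | x != v}.

Definition del_rel : rel Tv := fun x y => e (val x) (val y).

Lemma adj_del (x y : Tv) : adj del_rel x y = adj e (val x) (val y).
Proof. by rewrite /adj /del_rel val_eqE. Qed.

Lemma del_rel_sym : symmetric del_rel.
Proof. by move=> x y; rewrite /del_rel e_sym. Qed.

Lemma card_del : #|{: Tv}| = #|T|.-1.
Proof. by rewrite card_sig -(cardC1 v); apply: eq_card => x; rewrite !inE. Qed.

Lemma corner_neq : u != v.
Proof. by case/andP: vu_corner; rewrite eq_sym. Qed.

Lemma corner_dom w : adj e v w -> adj e u w.
Proof. by case/andP: vu_corner => _ /forallP /(_ w) /implyP. Qed.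

Definition retract (x : T) : Tv := insubd (Sub u corner_neq : Tv) x.

Lemma val_retract x : val (retract x) = if x != v then x else u.
Proof. by rewrite /retract val_insubd. Qed.

Lemma retract_val (x : Tv) : retract (val x) = x.
Proof. by apply: val_inj; rewrite val_retract (valP x). Qed.

Lemma adj_retract x y : adj e x y -> adj del_rel (retract x) (retract y).
Proof.
have adjC a b : adj e a b = adj e b a by rewrite /adj eq_sym e_sym.
rewrite adj_del !val_retract.
case: (eqVneq x v) => [->|_]; case: (eqVneq y v) => [->|_] /=.
- by move=> _; apply: adjxx.
- exact: corner_dom.
- by rewrite adjC => /corner_dom; rewrite adjC.
- by [].
Qed.

Lemma retract_moved (c : Tv) x : retract x = c -> val c != x -> x = v /\ val c = u.
Proof. by move=> <-; rewrite val_retract; case: (eqVneq x v) => [->|]; rewrite ?eqxx. Qed.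

Lemma catch_in_retract k c (r : Tv) :
  catch_in e k c (val r) -> catch_in del_rel k (retract c) r.
Proof.
elim: k c r => [//|k IH] c r; rewrite catch_inS => /existsP[c' /andP[cc' win]].
rewrite catch_inS; apply/existsP; exists (retract c'); rewrite adj_retract //=.
case/orP: win => [/eqP ->|/forallP win]; first by rewrite retract_val eqxx.
apply/orP; right; apply/forallP => r'; apply/implyP; rewrite adj_del => rr'.
case/orP: (implyP (win (val r')) rr') => [/eqP <-|/IH ->]; last by rewrite orbT.
by rewrite retract_val eqxx.
Qed.

Lemma catch_in_shadow k (c : Tv) r :
  catch_in del_rel k c (retract r) -> catch_in e k.+1 (val c) r.
Proof.
elim: k c r => [//|k IH] c r; rewrite catch_inS => /existsP[c' /andP[cc' win]].
rewrite catch_inS; apply/existsP; exists (val c'); rewrite -adj_del cc' andTb.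
have [-> //|c'r] := eqVneq (val c') r.
apply/orP; right; apply/forallP => r'; apply/implyP => rr'.
have [-> //|r'c'] := eqVneq r' (val c'); rewrite orFb; rewrite eq_sym in r'c'.
case/orP: win => [/eqP/esym/retract_moved/(_ c'r) [rv ->]|/forallP win].
  by apply/catch_in_adj/corner_dom; rewrite -rv.
case/orP: (implyP (win (retract r')) (adj_retract rr')) => [/eqP|]; last exact: IH.
move=> /retract_moved/(_ r'c') [-> ->]; exact/catch_in_adj/corner_dom/adjxx.
Qed.

Lemma capt1_le_shadow k : capt1_le del_rel k -> capt1_le e k.+1.
Proof.
case=> c0 win; exists (val c0) => r rc0.
have [/retract_moved|/win/catch_in_shadow //] := eqVneq (retract r) c0.
by rewrite eq_sym => /(_ rc0) [-> ->]; exact/catch_in_adj/corner_dom/adjxx.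
Qed.

Lemma capt1_le_retract k : capt1_le e k -> capt1_le del_rel k.
Proof.
case=> c0 win; exists (retract c0) => r rc0; apply/catch_in_retract/win.
by apply: contra rc0 => /eqP <-; rewrite retract_val.
Qed.

End CornerRemoval.

Arguments del_rel {T} e v.

Definition look (t : seq (seq bool)) i j := nth false (nth [::] t i) j.

Definition is_table n (t : seq (seq bool)) :=
  (size t == n) && all (fun r => size r == n) t.

Lemma is_table_size n t : is_table n t -> size t = n.
Proof. by case/andP => /eqP. Qed.

Lemma is_table_row n t r : is_table n t -> r \in t -> size r = n.
Proof. by case/andP => _ /allP rows /rows /eqP. Qed.

Lemma is_table_nth n t i : is_table n t -> i < n -> size (nth [::] t i) = n.
Proof.
by move=> tn i_lt; apply: (is_table_row tn); rewrite mem_nth // (is_table_size tn).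
Qed.

Fixpoint row_or (a b : seq bool) : seq bool :=
  match a, b with x :: a', y :: b' => (x || y) :: row_or a' b' | _, _ => [::] end.

Fixpoint row_sub (a b : seq bool) : bool :=
  match a, b with x :: a', y :: b' => (x ==> y) && row_sub a' b' | _, _ => true end.

Definition row_unit n i := [seq j == i | j <- iota 0 n].

Fixpoint row_or_sel (sel : seq bool) (U : seq (seq bool)) (acc : seq bool) :=
  match sel, U with
  | s :: sel', u :: U' => row_or_sel sel' U' (if s then row_or u acc else acc)
  | _, _ => acc
  end.

Lemma size_row_or a b : size (row_or a b) = minn (size a) (size b).
Proof. by elim: a b => [|x a IH] [|y b] //=; rewrite ?minn0 // IH minnSS. Qed.

Lemma nth_row_or a b j : size a = size b ->
  nth false (row_or a b) j = nth false a j || nth false b j.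
Proof.
by elim: a b j => [|x a IH] [|y b] [|j] //= [sab]; apply: IH.
Qed.

Lemma row_subE n a b : size a = n -> size b = n ->
  row_sub a b = all (fun r => nth false a r ==> nth false b r) (iota 0 n).
Proof.
elim: n a b => [|n IH] [|x a] [|y b] //= [sa] [sb].
by rewrite -[1]/(1 + 0) iotaDl all_map (IH a b).
Qed.

Lemma size_row_unit n i : size (row_unit n i) = n.
Proof. by rewrite size_map size_iota. Qed.

Lemma nth_row_unit n i j : j < n -> nth false (row_unit n i) j = (j == i).
Proof. by move=> j_lt; rewrite (nth_map 0) ?size_iota // nth_iota. Qed.

Lemma size_row_or_sel sel U acc : (forall u, u \in U -> size u = size acc) ->
  size (row_or_sel sel U acc) = size acc.
Proof.
elim: sel U acc => [|s sel IH] [|u U] acc //= sU.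
have su : size u = size acc by rewrite sU ?mem_head.
have s_acc : size (if s then row_or u acc else acc) = size acc.
  by case: s => //; rewrite size_row_or su minnn.
by rewrite IH // => u' u'U; rewrite s_acc sU // inE u'U orbT.
Qed.

Lemma nth_row_or_sel sel U acc j : size sel = size U ->
  (forall u, u \in U -> size u = size acc) ->
  nth false (row_or_sel sel U acc) j =
  nth false acc j || has (fun c => nth false sel c && nth false (nth [::] U c) j)
                         (iota 0 (size sel)).
Proof.
elim: sel U acc => [|s sel IH] [|u U] acc //= => [_ _|[sel_U] sU].
  by rewrite orbF.
have su : size u = size acc by rewrite sU ?mem_head.
have s_acc : size (if s then row_or u acc else acc) = size acc.
  by case: s => //; rewrite size_row_or su minnn.
rewrite IH // => [|u' u'U]; last by rewrite s_acc sU // inE u'U orbT.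
rewrite -[1]/(1 + 0) iotaDl has_map.
by case: s {s_acc} => //=; rewrite nth_row_or // orbA [nth false u j || _]orbC.
Qed.

(* Row [c] of [safe_rows n A W] lists the robber positions [r] from which a
   cop who has just moved to [c] wins: [r = c], or every robber move lands on
   [c] or in row [c] of [W].  Row [i] of [catch_step n A W] is the union of the
   rows [c] of [safe_rows n A W] over the neighbours [c] of [i]. *)
Definition safe_rows n (A W : seq (seq bool)) :=
  [seq let w := row_or (row_unit n p.1) p.2 in
       row_or (row_unit n p.1) [seq row_sub a w | a <- A]
  | p <- zip (iota 0 n) W].

Definition catch_step n (A W : seq (seq bool)) :=
  let safe := safe_rows n A W in [seq row_or_sel a safe (nseq n false) | a <- A].

Definition catch_table n A k :=
  iter k (catch_step n A) (nseq n (nseq n false)).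

Section CatchStep.
Variables (n : nat) (A W : seq (seq bool)).
Hypotheses (An : is_table n A) (Wn : is_table n W).

Lemma size_safe_rows : size (safe_rows n A W) = n.
Proof. by rewrite size_map size_zip size_iota (is_table_size Wn) minnn. Qed.

Lemma nth_safe_rows c : c < n -> nth [::] (safe_rows n A W) c =
  row_or (row_unit n c) [seq row_sub a (row_or (row_unit n c) (nth [::] W c)) | a <- A].
Proof.
move=> c_lt; rewrite (nth_map (0, [::])) ?size_zip ?size_iota ?(is_table_size Wn) ?minnn //.
by rewrite nth_zip ?size_iota ?(is_table_size Wn) //= nth_iota.
Qed.

Lemma size_safe_row u : u \in safe_rows n A W -> size u = n.
Proof.
case/(nthP [::]) => c; rewrite size_safe_rows => c_lt <-.
by rewrite nth_safe_rows // size_row_or size_row_unit size_map (is_table_size An) minnn.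
Qed.

Lemma is_table_catch_step : is_table n (catch_step n A W).
Proof.
apply/andP; split; first by rewrite size_map (is_table_size An).
apply/allP => r /mapP[a aA ->]; rewrite size_row_or_sel size_nseq //.
exact: size_safe_row.
Qed.

Lemma look_catch_step i j : i < n -> j < n ->
  look (catch_step n A W) i j =
  has (fun c => look A i c && ((c == j) ||
     all (fun r => look A j r ==> (r == c) || look W c r) (iota 0 n))) (iota 0 n).
Proof.
move=> i_lt j_lt; rewrite /look (nth_map [::]) ?(is_table_size An) //.
rewrite nth_row_or_sel ?(is_table_nth An) ?size_safe_rows //; last first.
  by move=> u /size_safe_row ->; rewrite size_nseq.
rewrite nth_nseq if_same orFb; apply: eq_in_has => c.
rewrite mem_iota add0n => /andP[_ c_lt]; congr (_ && _).
rewrite nth_safe_rows // nth_row_or; last first.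
  by rewrite size_row_unit size_map (is_table_size An).
rewrite nth_row_unit // eq_sym (nth_map [::]) ?(is_table_size An) //.
rewrite (row_subE (n := n)) ?(is_table_nth An) //; last first.
  by rewrite size_row_or size_row_unit (is_table_nth Wn) // minnn.
congr (_ || _); apply: eq_in_all => r; rewrite mem_iota add0n => /andP[_ r_lt].
by rewrite nth_row_or ?nth_row_unit // size_row_unit (is_table_nth Wn).
Qed.

End CatchStep.

Lemma is_table_catch_table n A k : is_table n A -> is_table n (catch_table n A k).
Proof.
move=> An; elim: k => [|k IH].
  apply/andP; split; first by rewrite size_nseq.
  by apply/allP => r; rewrite mem_nseq => /andP[_ /eqP ->]; rewrite size_nseq.
by rewrite /catch_table iterS; apply: is_table_catch_step.
Qed.

Definition table_capt n (t : seq (seq bool)) :=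
  has (fun c0 => all (fun r => (r == c0) || look t c0 r) (iota 0 n)) (iota 0 n).

Definition table_corner n (A : seq (seq bool)) v :=
  has (fun u => (u != v) && all (fun w => look A v w ==> look A u w) (iota 0 n))
      (iota 0 n).

Section EnumeratedGraph.
Variables (T : finType) (e : rel T) (x0 : T) (n : nat) (s : seq T) (A : seq (seq bool)).
Hypotheses (s_uniq : uniq s) (s_full : forall x, x \in s) (s_size : size s = n).
Hypothesis An : is_table n A.
Hypothesis A_adj : forall i j, i < n -> j < n ->
  look A i j = adj e (nth x0 s i) (nth x0 s j).

Lemma has_nth_enum (P : pred T) :
  has (fun i => P (nth x0 s i)) (iota 0 n) = [exists x, P x].
Proof.
rewrite -s_size -(has_map (nth x0 s) P) -/(mkseq _ _) mkseq_nth.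
by apply/hasP/existsP => [[x _ Px]|[x Px]]; exists x.
Qed.

Lemma all_nth_enum (P : pred T) :
  all (fun i => P (nth x0 s i)) (iota 0 n) = [forall x, P x].
Proof.
rewrite -s_size -(all_map (nth x0 s) P) -/(mkseq _ _) mkseq_nth.
by apply/allP/forallP => [Ps x|Ps x _]; apply: Ps.
Qed.

Lemma look_catch_table k i j : i < n -> j < n ->
  look (catch_table n A k) i j = catch_in e k (nth x0 s i) (nth x0 s j).
Proof.
elim: k i j => [|k IH] i j i_lt j_lt.
  by rewrite /look /catch_table /= nth_nseq i_lt nth_nseq if_same.
rewrite /catch_table iterS look_catch_step ?is_table_catch_table // catch_inS.
rewrite -has_nth_enum; apply: eq_in_has => c; rewrite mem_iota => /andP[_ c_lt].
rewrite A_adj // nth_uniq ?s_size // -all_nth_enum.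
congr (_ && (_ || _)); apply: eq_in_all => r; rewrite mem_iota => /andP[_ r_lt].
by rewrite A_adj // nth_uniq ?s_size // IH.
Qed.

Lemma table_capt_capt1_le k : table_capt n (catch_table n A k) -> capt1_le e k.
Proof.
case/hasP => c0; rewrite mem_iota => /andP[_ c0_lt] /allP win.
exists (nth x0 s c0) => r rc0; have r_lt : index r s < n by rewrite -s_size index_mem.
move: (win (index r s)); rewrite mem_iota r_lt => /(_ isT).
have eq_r : (index r s == c0) = (r == nth x0 s c0).
  by rewrite -(nth_uniq x0 _ _ s_uniq) ?s_size // nth_index.
by rewrite look_catch_table // eq_r (negbTE rc0) nth_index.
Qed.

Lemma table_corner_corner i u : i < n -> corner e (nth x0 s i) u ->
  table_corner n A i.
Proof.
move=> i_lt /andP[iu /forallP dom].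
have u_lt : index u s < n by rewrite -s_size index_mem.
apply/hasP; exists (index u s); first by rewrite mem_iota.
rewrite -(nth_uniq x0 _ _ s_uniq) ?s_size // nth_index // eq_sym iu /=.
apply/allP => w; rewrite mem_iota => /andP[_ w_lt].
by rewrite !A_adj ?index_mem // nth_index //; apply/implyP: (dom (nth x0 s w)).
Qed.

End EnumeratedGraph.

Definition code_edge (code : seq (seq bool)) i j :=
  if i < j then nth false (nth [::] code j) i else nth false (nth [::] code i) j.

(* Row [a] of a code lists the adjacencies of vertex [a] to the vertices [k < a]. *)
Definition code_table (code : seq (seq bool)) n :=
  [seq [seq (i == j) || code_edge code i j | j <- iota 0 n] | i <- iota 0 n].

Definition code_of (f : nat -> nat -> bool) n :=
  [seq [seq f k a | k <- iota 0 a] | a <- iota 0 n].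

Definition code_adj (f : nat -> nat -> bool) i j :=
  (i == j) || (if i < j then f i j else f j i).

Fixpoint bitseqs k : seq bitseq :=
  if k is k'.+1 then [seq b :: l | b <- [:: true; false], l <- bitseqs k'] else [:: [::]].

Fixpoint dismantlable_codes n : seq (seq bitseq) :=
  if n is n'.+1 then
    flatten [seq [seq rcons L b | b <- bitseqs n' &
                   (n' == 0) || table_corner n (code_table (rcons L b) n) n']
            | L <- dismantlable_codes n']
  else [:: [::]].

(* With [v] the last of the 7 vertices: either [G - v] is caught within 2
   rounds, so [G] within 3 by the shadow strategy, or [G] is checked directly. *)
Definition check7 (cH : seq bitseq) :=
  if table_capt 6 (catch_table 6 (code_table cH 6) 2) then true
  else all (fun b => let A := code_table (rcons cH b) 7 in
              if table_corner 7 A 6 then table_capt 7 (catch_table 7 A 3) else true)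
           (bitseqs 6).

Lemma check7_dismantlable : all check7 (dismantlable_codes 6).
Proof. vm_cast_no_check (erefl true). Qed.

Lemma look_code_table f n i j : i < n -> j < n ->
  look (code_table (code_of f n) n) i j = code_adj f i j.
Proof.
have nth_iota_map (g : nat -> bool) k m :
    k < m -> nth false [seq g x | x <- iota 0 m] k = g k.
  by move=> k_lt; rewrite (nth_map 0) ?size_iota // nth_iota.
move=> i_lt j_lt; rewrite /look (nth_map 0) ?size_iota // nth_iota // nth_iota_map //.
rewrite /code_edge /code_adj /code_of.
by case: ltngtP => // [ij|ji]; rewrite (nth_map 0) ?size_iota // nth_iota // nth_iota_map.
Qed.

Lemma is_table_code_table code n : is_table n (code_table code n).
Proof.
apply/andP; split; first by rewrite size_map size_iota.
by apply/allP => r /mapP[i _ ->]; rewrite size_map size_iota.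
Qed.

Lemma code_of_rcons f n : code_of f n.+1 = rcons (code_of f n) [seq f k n | k <- iota 0 n].
Proof. by rewrite /code_of -addn1 iotaD cats1 map_rcons. Qed.

Lemma mem_bitseqs l : l \in bitseqs (size l).
Proof.
elim: l => [|b l IH] //=; rewrite mem_cat.
by case: b; apply/orP; [left | right]; rewrite ?cats0; apply: map_f.
Qed.

Lemma code_of_dismantlable f n :
  (forall i, 0 < i < n ->
     exists2 j, j < i & forall k, k <= i -> code_adj f i k -> code_adj f j k) ->
  code_of f n \in dismantlable_codes n.
Proof.
elim: n => [//|n IH] dism; rewrite code_of_rcons /=; apply/flattenP.
set b := [seq f k n | k <- iota 0 n].
exists [seq rcons (code_of f n) b' | b' <- bitseqs n &
          (n == 0) || table_corner n.+1 (code_table (rcons (code_of f n) b') n.+1) n].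
  apply: map_f; apply: IH => i /andP[i_gt0 i_lt].
  by apply: dism; rewrite i_gt0 ltnW.
apply: map_f; rewrite mem_filter -code_of_rcons.
have -> : b \in bitseqs n by have := mem_bitseqs b; rewrite size_map size_iota.
rewrite andbT; have [-> //|n_gt0] := posnP n; apply/orP; right.
have /dism [j j_lt dom] : 0 < n < n.+1 by rewrite n_gt0 /=.
apply/hasP; exists j; first by rewrite mem_iota /= ltnS ltnW.
rewrite neq_ltn j_lt orTb andTb; apply/allP => w; rewrite mem_iota => /andP[_ w_lt].
by rewrite !look_code_table ?(ltn_trans j_lt) //; apply/implyP/dom.
Qed.

Definition dismantling (T : finType) (e : rel T) (x0 : T) (s : seq T) :=
  forall i, 0 < i < size s -> exists2 j, j < i &
    forall k, k <= i -> adj e (nth x0 s i) (nth x0 s k) -> adj e (nth x0 s j) (nth x0 s k).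

Section EnumeratedCode.
Variables (T : finType) (e : rel T) (x0 : T) (s : seq T).
Hypotheses (e_sym : symmetric e) (s_uniq : uniq s).

Definition enum_rel k a := e (nth x0 s k) (nth x0 s a).

Lemma code_adj_enum i j : i < size s -> j < size s ->
  code_adj enum_rel i j = adj e (nth x0 s i) (nth x0 s j).
Proof.
move=> i_lt j_lt; rewrite /code_adj /adj nth_uniq //.
by case: (i == j) => //=; case: (i < j) => //; rewrite /enum_rel e_sym.
Qed.

Lemma look_code_table_enum n i j : n <= size s -> i < n -> j < n ->
  look (code_table (code_of enum_rel n) n) i j = adj e (nth x0 s i) (nth x0 s j).
Proof.
move=> n_le i_lt j_lt.
by rewrite look_code_table // code_adj_enum // (leq_trans _ n_le).
Qed.

Lemma dismantling_code_of n : dismantling e x0 s -> n <= size s ->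
  code_of enum_rel n \in dismantlable_codes n.
Proof.
move=> dism n_le; apply: code_of_dismantlable => i /andP[i_gt0 i_lt].
have i_lts : i < size s := leq_trans i_lt n_le.
have [|j j_lt dom] := dism i; first by rewrite i_gt0.
exists j => // k k_le; rewrite !code_adj_enum ?(ltn_trans j_lt) ?(leq_ltn_trans k_le) //.
exact: dom.
Qed.

End EnumeratedCode.

Section DismantlingCorner.
Variables (T : finType) (e : rel T) (v u : T).
Hypothesis vu_corner : corner e v u.
Variable sH : seq {x : T | x != v}.
Hypotheses (sH_uniq : uniq sH) (sH_full : forall x, x \in sH).

Local Notation s := (rcons (map val sH) v).

Lemma rcons_corner_uniq : uniq s.
Proof.
rewrite rcons_uniq map_inj_uniq ?sH_uniq ?andbT; last exact: val_inj.
by apply/mapP => -[x _ xv]; have := valP x; rewrite -xv eqxx.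
Qed.

Lemma rcons_corner_full x : x \in s.
Proof.
rewrite mem_rcons inE; have [//|xv] := eqVneq x v.
by apply/mapP; exists (Sub x xv).
Qed.

Lemma nth_rcons_corner x0 y0 i : i < size sH -> nth x0 s i = val (nth y0 sH i).
Proof. by move=> i_lt; rewrite nth_rcons size_map i_lt (nth_map y0). Qed.

Lemma nth_rcons_corner_last x0 : nth x0 s (size sH) = v.
Proof. by rewrite nth_rcons size_map ltnn eqxx. Qed.

Lemma dismantling_rcons_corner x0 y0 :
  dismantling (del_rel e v) y0 sH -> dismantling e x0 s.
Proof.
move=> dismH i; rewrite size_rcons size_map ltnS => /andP[i_gt0].
rewrite leq_eqVlt => /orP[/eqP ->|i_lt].
  have u_s : u \in map val sH by apply/mapP; exists (Sub u (corner_neq vu_corner)).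
  exists (index u (map val sH)); first by rewrite -(size_map val) index_mem.
  move=> k _; rewrite nth_rcons_corner_last [nth x0 _ (index _ _)]nth_rcons.
  rewrite index_mem u_s nth_index //.
  exact: corner_dom.
have [j j_lt dom] := dismH i (introT andP (conj i_gt0 i_lt)).
exists j => // k k_le.
rewrite !(nth_rcons_corner x0 y0) ?(leq_ltn_trans k_le i_lt) ?(ltn_trans j_lt i_lt) //.
rewrite -!adj_del.
exact: dom.
Qed.

End DismantlingCorner.

Lemma dismantling_exists n (T : finType) (e : rel T) (x0 : T) :
  symmetric e -> #|T| = n.+1 -> (exists K, capt1_le e K) ->
  exists s, [/\ uniq s, forall x, x \in s, size s = n.+1 & dismantling e x0 s].
Proof.
elim: n T e x0 => [|n IH] T e x0 e_sym card_T [K win].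
  have [x T_x] := fintype1 card_T.
  exists [:: x0]; split=> // [y|[|[|i]] //]; first by rewrite (T_x y) (T_x x0) inE.
have [v [u vu]] : exists v u, corner e v u by apply: (capt1_le_corner win); rewrite card_T.
have [|||sH [sH_uniq sH_full sH_size sH_dism]] :=
  IH _ (del_rel e v) (Sub u (corner_neq vu)).
- exact: del_rel_sym.
- by rewrite card_del card_T.
- by exists K; exact: (capt1_le_retract e_sym vu win).
exists (rcons (map val sH) v); split.
- exact: rcons_corner_uniq.
- exact: rcons_corner_full.
- by rewrite size_rcons size_map sH_size.
- exact: (dismantling_rcons_corner vu sH_full x0 sH_dism).
Qed.

Lemma capt1_le_card7 (T : finType) (e : rel T) :
  symmetric e -> #|T| = 7 -> (exists K, capt1_le e K) -> capt1_le e 3.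
Proof.
move=> e_sym card_T [K win].
have [v [u vu]] : exists v u, corner e v u by apply: (capt1_le_corner win); rewrite card_T.
pose y0 : {x : T | x != v} := Sub u (corner_neq vu).
have [||sH [sH_uniq sH_full sH_size sH_dism]] :=
  dismantling_exists (n := 5) y0 (del_rel_sym e_sym).
- by rewrite card_del card_T.
- by exists K; exact: (capt1_le_retract e_sym vu win).
pose s := rcons (map val sH) v.
have s_uniq : uniq s := rcons_corner_uniq sH_uniq.
have s_full : forall x, x \in s := rcons_corner_full sH_full.
have s_size : size s = 7 by rewrite size_rcons size_map sH_size.
have s_dism : dismantling e v s := dismantling_rcons_corner vu sH_full v sH_dism.
have s_sH i : i < 6 -> nth v s i = val (nth y0 sH i).
  by move=> i_lt; apply: nth_rcons_corner; rewrite sH_size.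
have s_last : nth v s 6 = v by have := nth_rcons_corner_last sH v; rewrite sH_size.
pose f := enum_rel e v s.
have G_adj i j : i < 7 -> j < 7 ->
    look (code_table (code_of f 7) 7) i j = adj e (nth v s i) (nth v s j).
  by apply: look_code_table_enum; rewrite ?s_size.
have H_adj i j : i < 6 -> j < 6 ->
    look (code_table (code_of f 6) 6) i j = adj (del_rel e v) (nth y0 sH i) (nth y0 sH j).
  by move=> i_lt j_lt; rewrite look_code_table_enum ?s_size // adj_del -!s_sH.
have codeH : code_of f 6 \in dismantlable_codes 6.
  by apply: dismantling_code_of; rewrite ?s_size.
move: (allP check7_dismantlable _ codeH); rewrite /check7.
case: ifP => [captH _|_ /allP check].
  apply: (capt1_le_shadow e_sym vu).
  exact: (table_capt_capt1_le sH_uniq sH_full sH_size (is_table_code_table _ _) H_adj).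
have last_row : [seq f k 6 | k <- iota 0 6] \in bitseqs 6.
  by have := mem_bitseqs [seq f k 6 | k <- iota 0 6]; rewrite size_map size_iota.
move: (check _ last_row); rewrite -code_of_rcons.
rewrite (table_corner_corner s_uniq s_full s_size G_adj (i := 6) (u := u)) ?s_last //.
exact: (table_capt_capt1_le s_uniq s_full s_size (is_table_code_table _ _) G_adj).
Qed.

Lemma capt1_le_card_sub4 n (T : finType) (e : rel T) :
  symmetric e -> #|T| = n -> 7 <= n -> (exists K, capt1_le e K) -> capt1_le e (n - 4).
Proof.
elim: n T e => [//|n IH] T e e_sym card_T n_ge7 [K win].
have [n7 | n_gt7] := eqVneq n.+1 7.
  by rewrite n7 in card_T *; apply: capt1_le_card7 => //; exists K.
have [v [u vu]] : exists v u, corner e v u.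
  by apply: (capt1_le_corner win); rewrite card_T; lia.
have -> : n.+1 - 4 = (n - 4).+1 by lia.
apply: (capt1_le_shadow e_sym vu); apply: IH.
- exact: del_rel_sym.
- by rewrite card_del card_T.
- by move: n_ge7 n_gt7; lia.
- by exists K; exact: (capt1_le_retract e_sym vu win).
Qed.

Section ManyRobbers.
Variables (T : finType) (e : rel T) (m : nat).
Local Notation cop_wins := (@cop_wins_within T e m).

Lemma cop_wins_within_mono k c R : cop_wins k c R -> forall k', k <= k' -> cop_wins k' c R.
Proof.
elim=> {k c R} [k c R R0 k' _|k c R c' cc' win IH [|k'] // le_kk'].
  exact: cww_done.
by apply: (@cww_step _ _ _ k' c R c') => // R2 move; apply: IH.
Qed.

Definition alive (R : 'I_m -> option T) : {set 'I_m} := [set i | R i != None].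

Lemma alive_capture c R : alive (capture c R) \subset alive R.
Proof. by apply/subsetP => i; rewrite !inE /capture; case: ifP. Qed.

Lemma alive_move R R2 : robber_move e R R2 -> alive R2 \subset alive R.
Proof.
by move=> move; apply/subsetP => i; rewrite !inE; have := move i; case: (R i) => // ->.
Qed.

Lemma alive_round c R R2 :
  robber_move e (capture c R) R2 -> alive (capture c R2) \subset alive R.
Proof.
move=> move; apply: subset_trans (alive_capture _ _) _.
exact: subset_trans (alive_move move) (alive_capture _ _).
Qed.

Lemma cop_wins_within_alive0 k c R : alive R = set0 -> cop_wins k c R.
Proof.
move=> R0; apply: cww_done => i; apply/eqP.
by have := in_set0 i; rewrite -R0 inE => /negbFE.
Qed.

Lemma cop_wins_within_walk d c c0 B R : within e d c c0 ->
  (forall R', alive R' \subset alive R -> cop_wins B c0 R') -> cop_wins (d + B) c R.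
Proof.
elim: d c R => [|d IH] c R /existsP[[p p_size] /andP[walk /eqP walk_end]] win.
  by move: p_size walk walk_end; case: p => //= _ _ ->; apply: win.
move: p_size walk walk_end; case: p => [|x p] //= p_size /andP[cx walk] walk_end.
rewrite addSn; apply: (@cww_step _ _ _ (d + B) c R x) => // R2 move.
have alive_R2 := alive_round move.
apply: IH => [|R' R'R2]; last exact/win/(subset_trans R'R2).
by apply/existsP; exists (Tuple p_size); rewrite /= walk walk_end eqxx.
Qed.

Lemma cop_wins_within_chase k c R i r J : R i = Some r -> catch_in e k c r ->
  (forall c' R', alive R' \subset alive R -> i \notin alive R' -> cop_wins J c' R') ->
  cop_wins (k + J) c R.
Proof.
elim: k c R r => [//|k IH] c R r Ri; rewrite catch_inS => /existsP[c' /andP[cc' win]] cont.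
rewrite addSn; apply: (@cww_step _ _ _ (k + J) c R c') => // R2 move.
have alive_R2 := alive_round move.
have caught : capture c' R2 i = None -> cop_wins (k + J) c' (capture c' R2).
  move=> R2i; apply: cop_wins_within_mono (leq_addl _ _).
  by apply: cont; rewrite // inE R2i.
have [rc'|rc'] := eqVneq r c'.
  apply: caught; have := move i; rewrite /capture Ri rc' eqxx => R2i.
  by rewrite R2i.
have := move i; rewrite /capture Ri eq_Some (negbTE rc') => -[w R2i rw].
have [wc'|wc'] := eqVneq w c'; first by apply: caught; rewrite /capture R2i wc' eqxx.
move: win; rewrite eq_sym (negbTE rc') orFb => /forallP /(_ w).
rewrite rw (negbTE wc') /= => win.
apply: (IH c' _ w) => [|//|c'' R' R'R2]; first by rewrite /capture R2i eq_Some (negbTE wc').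
by move=> iR'; apply: cont => //; apply: subset_trans R'R2 _; apply: alive_R2.
Qed.

Lemma cop_wins_within_alive M D c0 :
  (forall r, catch_in e M c0 r) ->
  (forall c, exists2 d, d <= D & within e d c c0) ->
  forall a R, #|alive R| <= a -> cop_wins (a * M + a.-1 * D) c0 R.
Proof.
move=> catch back; elim=> [|a IH] R alive_le.
  by apply: cop_wins_within_alive0; apply/eqP; rewrite -cards_eq0 -leqn0.
have [/cop_wins_within_alive0 //|[i]] := set_0Vmem (alive R).
rewrite inE; case Ri: (R i) => [r|] // _.
have -> : a.+1 * M + a.+1.-1 * D = M + (a * M + a * D) by rewrite mulSn /=; lia.
apply: (cop_wins_within_chase Ri (catch r)) => c' R' R'R iR'.
have [/cop_wins_within_alive0 //|[j jR']] := set_0Vmem (alive R').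
have alive_lt : #|alive R'| < #|alive R|.
  by apply/proper_card/properP; split=> //; exists i; rewrite // inE Ri.
have a_gt0 : 0 < a.
  have alive_gt0 : 0 < #|alive R'| by apply/card_gt0P; exists j.
  by move: alive_lt alive_le alive_gt0; lia.
have [d d_le walk] := back c'.
have walk_win : cop_wins (d + (a * M + a.-1 * D)) c' R'.
  apply: (cop_wins_within_walk walk) => R'' R''R'; apply: IH.
  by move: (subset_leq_card R''R') alive_lt alive_le; lia.
apply: (cop_wins_within_mono walk_win).
by case: a a_gt0 {IH alive_le alive_lt walk_win} => [//|a] _ /=; rewrite mulSn; lia.
Qed.

End ManyRobbers.

Lemma within_dist (T : finType) (e : rel T) c y :
  connect e c y -> within e (dist e c y) c y.
Proof.
move/connectP => [p walk ->]; case: (shortenP walk) => p' walk' p'_uniq _.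
have p'_lt : size p' < #|T|.
  by have := max_card (mem (c :: p')); rewrite (card_uniqP p'_uniq).
have within_p' : within e (size p') c (last c p').
  apply/existsP; exists (in_tuple p'); rewrite /= eqxx andbT.
  by apply: sub_path walk' => x z xz; rewrite /adj xz orbT.
have has_within : has (fun k => within e k c (last c p')) (iota 0 #|T|).
  by apply/hasP; exists (size p'); rewrite // mem_iota.
have dist_lt : dist e c (last c p') < #|T|.
  by rewrite -[X in _ < X](size_iota 0 #|T|) -has_find.
by have := nth_find 0 has_within; rewrite nth_iota.
Qed.

Lemma dist_le_diam (T : finType) (e : rel T) c y : dist e c y <= diam e.
Proof. exact: leq_trans (leq_bigmax y) (leq_bigmax c). Qed.

Theorem mainTheorem2 (T : finType) (e : rel T) (e_sym : symmetric e)
  (e_conn : forall x y : T, connect e x y) (hn : 7 <= #|T|)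
  (hcw : copwin e) (m : nat) (hm : 1 <= m) :
  capt_le e m ((m - 1) * diam e + m * (#|T| - 4)).
Proof.
have [|c0 win] := capt1_le_card_sub4 e_sym (erefl #|T|) hn.
  by case: hcw => N /capt_le1_capt1_le; exists N.
have catch r : catch_in e (#|T| - 4) c0 r.
  have [-> |/win //] := eqVneq r c0.
  have -> : #|T| - 4 = (#|T| - 5).+1 by lia.
  exact/catch_in_adj/adjxx.
have back c : exists2 d, d <= diam e & within e d c c0.
  by exists (dist e c c0); [apply: dist_le_diam | apply: within_dist].
exists c0 => R0; rewrite addnC subn1.
by apply: cop_wins_within_alive catch back _ _ _; rewrite -[m in _ <= m]card_ord max_card.
Qed.
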